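(* Assume the local Lipschitz condition (2.2) and let $h$ be as in (2.3). Let $\Delta\in(0,\Delta^*]$ be small enough that $|f(0)|\le h(\Delta)$, $|g(0)|\le h(\Delta)$ and $L_{h(\Delta)}\ge 1$. Then the modified truncated functions $f_\Delta$ and $g_\Delta$ are globally Lipschitz with constant $4L_{h(\Delta)}$: $$|f_\Delta(x)-f_\Delta(\bar x)|\vee|g_\Delta(x)-g_\Delta(\bar x)|\le 4L_{h(\Delta)}|x-\bar x|\qquad\text{for all }x,\bar x\in\mathbb{R}^d.$$
   Context: $f:\mathbb{R}^d\to\mathbb{R}^d$ and $g:\mathbb{R}^d\to\mathbb{R}^{d\times m}$ are measurable. $|\cdot|$ denotes the Euclidean norm of vectors and the trace norm $|A|=\sqrt{\mathrm{trace}(A^TA)}$ of matrices. Condition (2.2) (local Lipschitz): for every $R>0$ there is $L_R>0$ such that $|f(x)-f(\bar x)|\vee|g(x)-g(\bar x)|\le L_R|x-\bar x|$ whenever $|x|\vee|\bar x|\le R$; $L_R$ is nondecreasing in $R$ and $L_R\uparrow\infty$ as $R\to\infty$. Condition (2.3): $\Delta^*>0$ and $h:(0,\Delta^*]\to(0,\infty)$ is strictly positive and decreasing with $\lim_{\Delta\to0}h(\Delta)=\infty$ and $\lim_{\Delta\to0}L_{h(\Delta)}^4\Delta=0$. Modified truncated functions: for $\Delta\in(0,\Delta^*]$, $f_\Delta(x)=f(x)$ if $|x|\le h(\Delta)$ and $f_\Delta(x)=\frac{|x|}{h(\Delta)}\,f\!\left(h(\Delta)\frac{x}{|x|}\right)$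 if $|x|>h(\Delta)$; $g_\Delta$ is defined in the same way from $g$. *)

From mathcomp Require Import ssreflect ssrfun ssrbool eqtype ssrnat fintype bigop.
From Stdlib Require Import Reals.
Open Scope R_scope.

Definition Vec (d : nat) := 'I_d -> R.
Definition Mat (d m : nat) := 'I_d -> 'I_m -> R.

Definition vzero (d : nat) : Vec d := fun _ => 0.
Definition vsub {d} (x y : Vec d) : Vec d := fun i => x i - y i.
Definition vscale {d} (c : R) (x : Vec d) : Vec d := fun i => c * x i.
Definition msub {d m} (A B : Mat d m) : Mat d m := fun i j => A i j - B i j.
Definition mscale {d m} (c : R) (A : Mat d m) : Mat d m := fun i j => c * A i j.

Definition vnorm {d} (x : Vec d) : R :=
  sqrt (\big[Rplus/0]_(i < d) (x i ^ 2)).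
(* trace norm |A| = sqrt(trace(A^T A)) = sqrt(sum_{i,j} A_ij^2) *)
Definition mnorm {d m} (A : Mat d m) : R :=
  sqrt (\big[Rplus/0]_(i < d) \big[Rplus/0]_(j < m) (A i j ^ 2)).

Definition f_trunc {d} (h : R -> R) (Delta : R) (f : Vec d -> Vec d) (x : Vec d) : Vec d :=
  if Rle_dec (vnorm x) (h Delta) then f x
  else vscale (vnorm x / h Delta) (f (vscale (h Delta / vnorm x) x)).

Definition g_trunc {d m} (h : R -> R) (Delta : R) (g : Vec d -> Mat d m) (x : Vec d) : Mat d m :=
  if Rle_dec (vnorm x) (h Delta) then g x
  else mscale (vnorm x / h Delta) (g (vscale (h Delta / vnorm x) x)).

Definition local_lipschitz {d m} (f : Vec d -> Vec d) (g : Vec d -> Mat d m)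
    (L : R -> R) : Prop :=
  (forall Rr, 0 < Rr -> 0 < L Rr) /\
  (forall Rr x xb, 0 < Rr -> vnorm x <= Rr -> vnorm xb <= Rr ->
      Rmax (vnorm (vsub (f x) (f xb))) (mnorm (msub (g x) (g xb)))
        <= L Rr * vnorm (vsub x xb)) /\
  (forall R1 R2, 0 < R1 -> R1 <= R2 -> L R1 <= L R2) /\
  (forall M, exists R0, 0 < R0 /\ forall Rr, R0 <= Rr -> M <= L Rr).

Definition cond_h (L : R -> R) (Dstar : R) (h : R -> R) : Prop :=
  0 < Dstar /\
  (forall D, 0 < D <= Dstar -> 0 < h D) /\
  (forall D1 D2, 0 < D1 -> D1 <= D2 -> D2 <= Dstar -> h D2 <= h D1) /\
  (forall M, exists eta, 0 < eta /\
      forall D, 0 < D <= Dstar -> D < eta -> M <= h D) /\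
  (forall eps, 0 < eps -> exists eta, 0 < eta /\
      forall D, 0 < D <= Dstar -> D < eta -> Rabs (L (h D) ^ 4 * D) < eps).

From mathcomp Require Import ssreflect ssrfun ssrbool eqtype ssrnat fintype bigop.
From Stdlib Require Import Reals Lra Psatz FunctionalExtensionality.
Open Scope R_scope.

(* Write [f_Δ x = φ x · f (x / φ x)] with [φ x = max 1 (|x| / h)], so that
   [x / φ x] stays in the ball of radius [h] where [f] is [L]-Lipschitz.
   For [|x| ≤ |x̄|],
     [f_Δ x - f_Δ x̄ = φ x (f (x/φ x) - f (x̄/φ x̄)) + (φ x - φ x̄) f (x̄/φ x̄)];
   the rescaled points satisfy [φ x |x/φ x - x̄/φ x̄| ≤ 2|x - x̄|], so the first
   term is at most [2L|x - x̄|], and since [φ] is [1/h]-Lipschitz while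
   [|f| ≤ (1 + L) h] on the ball, the second is at most [(1 + L)|x - x̄|].
   Only the norm properties of the values are used, so the argument covers
   [f] and [g] alike. *)

Lemma Rmax_dist_le c a b : Rabs (Rmax c a - Rmax c b) <= Rabs (a - b).
Proof. by rewrite /Rmax; do 2 case: Rle_dec; move=> *; split_Rabs; lra. Qed.

Lemma cauchy_schwarz2 p q a b :
  p * q + a * b <= sqrt (a ^ 2 + p ^ 2) * sqrt (b ^ 2 + q ^ 2).
Proof.
rewrite -sqrt_mult; try nra.
apply: Rle_trans (Rle_abs _) _; rewrite -sqrt_Rsqr_abs.
apply: sqrt_le_1_alt; rewrite /Rsqr.
have := pow2_ge_0 (p * b - a * q); nra.
Qed.

Lemma minkowski_step a b T A B :
  0 <= T -> 0 <= A -> 0 <= B -> sqrt T <= sqrt A + sqrt B ->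
  sqrt ((a + b) ^ 2 + T) <= sqrt (a ^ 2 + A) + sqrt (b ^ 2 + B).
Proof.
move=> T_ge0 A_ge0 B_ge0 le_T.
have cs := cauchy_schwarz2 (sqrt A) (sqrt B) a b; rewrite !pow2_sqrt // in cs.
have le_T2 : T <= (sqrt A + sqrt B) ^ 2.
  by rewrite -(pow2_sqrt T) //; apply: pow_incr; split; first exact: sqrt_pos.
have aA_ge0 : 0 <= a ^ 2 + A by have := pow2_ge_0 a; lra.
have bB_ge0 : 0 <= b ^ 2 + B by have := pow2_ge_0 b; lra.
have := pow2_sqrt _ aA_ge0; have := pow2_sqrt _ bB_ge0.
have := sqrt_pos (a ^ 2 + A); have := sqrt_pos (b ^ 2 + B).
have := pow2_sqrt _ A_ge0; have := pow2_sqrt _ B_ge0 => *.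
rewrite -[_ + sqrt (b ^ 2 + B)]sqrt_pow2; last lra.
apply: sqrt_le_1_alt; nra.
Qed.

Lemma sumR_ge0 n (F : 'I_n -> R) :
  (forall i, 0 <= F i) -> 0 <= \big[Rplus/0]_(i < n) F i.
Proof. by move=> F_ge0; apply: big_ind => //; [lra | apply: Rplus_le_le_0_compat]. Qed.

Lemma sumR_le n (F G : 'I_n -> R) :
  (forall i, F i <= G i) -> \big[Rplus/0]_(i < n) F i <= \big[Rplus/0]_(i < n) G i.
Proof. by move=> leFG; apply: big_ind2 => //; [lra | apply: Rplus_le_compat]. Qed.

Lemma mulR_sumr n c (F : 'I_n -> R) :
  c * \big[Rplus/0]_(i < n) F i = \big[Rplus/0]_(i < n) (c * F i).
Proof. by rewrite (big_morph (Rmult c) (Rmult_plus_distr_l c) (Rmult_0_r c)). Qed.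

Lemma minkowski n (u v : 'I_n -> R) :
  sqrt (\big[Rplus/0]_(i < n) (u i + v i) ^ 2)
  <= sqrt (\big[Rplus/0]_(i < n) u i ^ 2) + sqrt (\big[Rplus/0]_(i < n) v i ^ 2).
Proof.
pose K T A B := [/\ 0 <= T, 0 <= A, 0 <= B & sqrt T <= sqrt A + sqrt B].
suff [] : K (\big[Rplus/0]_(i < n) (u i + v i) ^ 2)
            (\big[Rplus/0]_(i < n) u i ^ 2) (\big[Rplus/0]_(i < n) v i ^ 2) by [].
apply: big_rec3 => [|i T A B _ [T0 A0 B0 leT]].
  by split; rewrite ?sqrt_0; lra.
split; try (apply: Rplus_le_le_0_compat => //; apply: pow2_ge_0).
exact: minkowski_step.
Qed.

Section VectorNorm.

Context {d : nat}.
Implicit Types (x y u v : Vec d).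

Lemma vnorm_ge0 x : 0 <= vnorm x.
Proof. exact: sqrt_pos. Qed.

Lemma eq_vnorm u v : (forall i, u i = v i) -> vnorm u = vnorm v.
Proof. by move=> euv; rewrite /vnorm; under eq_bigr do rewrite euv. Qed.

Lemma vnormD u v : vnorm (fun i => u i + v i) <= vnorm u + vnorm v.
Proof. exact: minkowski. Qed.

Lemma vnormZ c x : vnorm (vscale c x) = Rabs c * vnorm x.
Proof.
rewrite /vnorm /vscale -sqrt_Rsqr_abs -sqrt_mult_alt; last exact: Rle_0_sqr.
by rewrite mulR_sumr; congr sqrt; apply: eq_bigr => i _; rewrite /Rsqr; ring.
Qed.

Lemma vnorm0 : vnorm (vzero d) = 0.
Proof.
rewrite (@eq_vnorm _ (vscale 0 (vzero d))) ?vnormZ ?Rabs_R0 ?Rmult_0_l // => i.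
by rewrite /vscale Rmult_0_l.
Qed.

Lemma vscale1 x : vscale 1 x = x.
Proof. by apply: functional_extensionality => i; rewrite /vscale Rmult_1_l. Qed.

Lemma vnorm_sub_scale c e u v :
  vnorm (vsub (vscale c u) (vscale e v))
  <= Rabs c * vnorm (vsub u v) + Rabs (c - e) * vnorm v.
Proof.
rewrite -!vnormZ (@eq_vnorm _ (fun i => vscale c (vsub u v) i + vscale (c - e) v i)).
  exact: vnormD.
by move=> i; rewrite /vsub /vscale; ring.
Qed.

Lemma vnorm_subC u v : vnorm (vsub u v) = vnorm (vsub v u).
Proof.
rewrite (@eq_vnorm _ (vscale (-1) (vsub v u))) ?vnormZ ?Rabs_Ropp ?Rabs_R1 ?Rmult_1_l //.
by move=> i; rewrite /vsub /vscale; ring.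
Qed.

Lemma vnorm_le_sub u v : vnorm u <= vnorm v + vnorm (vsub u v).
Proof.
rewrite {1}(@eq_vnorm u (fun i => v i + vsub u v i)); first exact: vnormD.
by move=> i; rewrite /vsub; ring.
Qed.

Lemma vnorm_dist_le u v : Rabs (vnorm u - vnorm v) <= vnorm (vsub u v).
Proof.
have := vnorm_le_sub u v; have := vnorm_le_sub v u; rewrite vnorm_subC => ? ?.
by apply: Rabs_le; lra.
Qed.

Lemma vnorm_sub0 x : vnorm (vsub x (vzero d)) = vnorm x.
Proof. by apply: eq_vnorm => i; rewrite /vsub /vzero Rminus_0_r. Qed.

End VectorNorm.

Section MatrixNorm.

Context {d m : nat}.
Implicit Types (A B : Mat d m).

Lemma mnorm_vnorm A : mnorm A = vnorm (fun i => vnorm (A i)).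
Proof.
rewrite /mnorm /vnorm; congr sqrt; apply: eq_bigr => i _.
by rewrite pow2_sqrt //; apply: sumR_ge0 => j; apply: pow2_ge_0.
Qed.

Lemma eq_mnorm A B : (forall i j, A i j = B i j) -> mnorm A = mnorm B.
Proof. by move=> eAB; rewrite !mnorm_vnorm; apply: eq_vnorm => i; apply: eq_vnorm. Qed.

Lemma mnormD A B : mnorm (fun i j => A i j + B i j) <= mnorm A + mnorm B.
Proof.
rewrite !mnorm_vnorm.
apply: (Rle_trans _ (vnorm (fun i => vnorm (A i) + vnorm (B i)))); last exact: vnormD.
rewrite /vnorm; apply: sqrt_le_1_alt; apply: sumR_le => i.
by apply: pow_incr; split; [apply: vnorm_ge0 | apply: vnormD].
Qed.

Lemma mnormZ c A : mnorm (mscale c A) = Rabs c * mnorm A.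
Proof.
rewrite !mnorm_vnorm -(Rabs_Rabsolu c) -vnormZ; apply: eq_vnorm => i.
exact: vnormZ.
Qed.

Lemma mscale1 A : mscale 1 A = A.
Proof. by do 2 apply: functional_extensionality => ?; rewrite /mscale Rmult_1_l. Qed.

Lemma mnorm_sub_scale c e A B :
  mnorm (msub (mscale c A) (mscale e B))
  <= Rabs c * mnorm (msub A B) + Rabs (c - e) * mnorm B.
Proof.
rewrite -!mnormZ (@eq_mnorm _ (fun i j => mscale c (msub A B) i j + mscale (c - e) B i j)).
  exact: mnormD.
by move=> i j; rewrite /msub /mscale; ring.
Qed.

Lemma mnorm_subC A B : mnorm (msub A B) = mnorm (msub B A).
Proof.
rewrite (@eq_mnorm _ (mscale (-1) (msub B A))) ?mnormZ ?Rabs_Ropp ?Rabs_R1 ?Rmult_1_l //.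
by move=> i j; rewrite /msub /mscale; ring.
Qed.

Lemma mnorm_le_sub A B : mnorm A <= mnorm B + mnorm (msub A B).
Proof.
rewrite {1}(@eq_mnorm A (fun i j => B i j + msub A B i j)); first exact: mnormD.
by move=> i j; rewrite /msub; ring.
Qed.

End MatrixNorm.

Section RadialTruncation.

Context {Y : Type} {sub : Y -> Y -> Y} {scale : R -> Y -> Y} {N : Y -> R}.
Hypothesis N_subC : forall u v, N (sub u v) = N (sub v u).
Hypothesis N_le_sub : forall u v, N u <= N v + N (sub u v).
Hypothesis N_sub_scale : forall c e u v,
  N (sub (scale c u) (scale e v)) <= Rabs c * N (sub u v) + Rabs (c - e) * N v.
Hypothesis scale1 : forall u, scale 1 u = u.

Variables (d : nat) (F : Vec d -> Y) (H L : R).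
Hypothesis H_gt0 : 0 < H.
Hypothesis L_ge1 : 1 <= L.
Hypothesis F_lipschitz_ball : forall x y, vnorm x <= H -> vnorm y <= H ->
  N (sub (F x) (F y)) <= L * vnorm (vsub x y).
Hypothesis NF0_le : N (F (vzero d)) <= H.

Definition radial_trunc (x : Vec d) : Y :=
  if Rle_dec (vnorm x) H then F x
  else scale (vnorm x / H) (F (vscale (H / vnorm x) x)).

Definition radial_factor (x : Vec d) : R := Rmax 1 (vnorm x / H).

Implicit Types x y z : Vec d.

Lemma radial_factor_ge1 x : 1 <= radial_factor x.
Proof. exact: Rmax_l. Qed.

Lemma radial_factor_small x : vnorm x <= H -> radial_factor x = 1.
Proof.
move=> le_xH; apply: Rmax_left.
by apply: (Rmult_le_reg_r H) => //; rewrite /Rdiv Rmult_assoc Rinv_l; lra.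
Qed.

Lemma radial_factor_large x : H <= vnorm x -> radial_factor x = vnorm x / H.
Proof.
move=> le_Hx; apply: Rmax_right.
by apply: (Rmult_le_reg_r H) => //; rewrite /Rdiv Rmult_assoc Rinv_l; lra.
Qed.

Lemma radial_factor_mulH x : radial_factor x * H = Rmax H (vnorm x).
Proof.
rewrite Rmult_comm -RmaxRmult; last lra.
by congr Rmax; field; lra.
Qed.

Lemma radial_factor_le x y : vnorm x <= vnorm y -> radial_factor x <= radial_factor y.
Proof.
move=> le_xy; apply: Rle_max_compat_l.
by apply: Rmult_le_compat_r => //; apply/Rlt_le/Rinv_0_lt_compat.
Qed.

Lemma radial_factor_dist x y :
  Rabs (radial_factor x - radial_factor y) * H <= vnorm (vsub x y).
Proof.
rewrite -(Rabs_pos_eq H) -?Rabs_mult ?Rmult_minus_distr_r ?radial_factor_mulH; last lra.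
exact: Rle_trans (Rmax_dist_le _ _ _) (vnorm_dist_le _ _).
Qed.

Lemma radial_rescale_in_ball x : vnorm (vscale (/ radial_factor x) x) <= H.
Proof.
have phi1 := radial_factor_ge1 x; have := Rmax_r H (vnorm x).
rewrite -radial_factor_mulH vnormZ Rabs_pos_eq => [le_x|]; last first.
  by apply/Rlt_le/Rinv_0_lt_compat; lra.
apply: (Rmult_le_reg_l (radial_factor x)); first lra.
by rewrite -Rmult_assoc Rinv_r; lra.
Qed.

Lemma radial_truncE x :
  radial_trunc x = scale (radial_factor x) (F (vscale (/ radial_factor x) x)).
Proof.
rewrite /radial_trunc; case: Rle_dec => [le_xH | nle_xH].
  by rewrite radial_factor_small // Rinv_1 vscale1 scale1.
have lt_Hx := Rnot_le_lt _ _ nle_xH.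
by rewrite radial_factor_large ?Rinv_div //; lra.
Qed.

Lemma F_bounded_ball z : vnorm z <= H -> N (F z) <= (1 + L) * H.
Proof.
move=> le_zH; have le_0H : vnorm (vzero d) <= H by rewrite vnorm0; lra.
have := N_le_sub (F z) (F (vzero d)); have := F_lipschitz_ball _ _ le_zH le_0H.
rewrite vnorm_sub0; nra.
Qed.

Lemma radial_rescale_dist x y : vnorm x <= vnorm y ->
  radial_factor x * vnorm (vsub (vscale (/ radial_factor x) x) (vscale (/ radial_factor y) y))
  <= 2 * vnorm (vsub x y).
Proof.
move=> le_xy; set px := radial_factor x; set py := radial_factor y.
have px1 : 1 <= px := radial_factor_ge1 x; have py1 : 1 <= py := radial_factor_ge1 y.
have -> : px * vnorm (vsub (vscale (/ px) x) (vscale (/ py) y))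
          = vnorm (vsub (vscale 1 x) (vscale (px / py) y)).
  rewrite -{1}(Rabs_pos_eq px) -?vnormZ; last lra.
  by apply: eq_vnorm => i; rewrite /vsub /vscale; field; lra.
apply: Rle_trans (vnorm_sub_scale _ _ _ _) _; rewrite Rabs_R1 Rmult_1_l.
suff : Rabs (1 - px / py) * vnorm y <= vnorm y - vnorm x.
  by have := vnorm_dist_le x y; split_Rabs; lra.
case: (Rle_lt_dec (vnorm y) H) => [le_yH | lt_Hy].
  rewrite /px /py !radial_factor_small; try lra.
  by rewrite Rdiv_diag ?Rminus_diag ?Rabs_R0; lra.
have le_pxy : px <= py := radial_factor_le _ _ le_xy.
have -> : Rabs (1 - px / py) * vnorm y = vnorm y - px * H.
  rewrite Rabs_pos_eq.
    by rewrite /py radial_factor_large; [field; split|]; lra.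
  suff : px / py <= 1 by lra.
  by apply: (Rmult_le_reg_r py); [lra | rewrite /Rdiv Rmult_assoc Rinv_l; lra].
by rewrite /px radial_factor_mulH; have := Rmax_r H (vnorm x); lra.
Qed.

Lemma radial_trunc_lipschitz_ordered x y : vnorm x <= vnorm y ->
  N (sub (radial_trunc x) (radial_trunc y)) <= 4 * L * vnorm (vsub x y).
Proof.
move=> le_xy; rewrite !radial_truncE.
set px := radial_factor x; set py := radial_factor y.
set x' := vscale (/ px) x; set y' := vscale (/ py) y.
have px1 : 1 <= px := radial_factor_ge1 x.
have dist_ge0 := vnorm_ge0 (vsub x y).
have near_part : px * N (sub (F x') (F y')) <= 2 * L * vnorm (vsub x y).
  have := F_lipschitz_ball _ _ (radial_rescale_in_ball x) (radial_rescale_in_ball y).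
  have := radial_rescale_dist _ _ le_xy; rewrite -/px -/py -/x' -/y'.
  have := vnorm_ge0 (vsub x' y'); nra.
have far_part : Rabs (px - py) * N (F y') <= (1 + L) * vnorm (vsub x y).
  have := F_bounded_ball _ (radial_rescale_in_ball y); rewrite -/py -/y'.
  have := radial_factor_dist x y; rewrite -/px -/py.
  have := Rabs_pos (px - py); nra.
apply: Rle_trans (N_sub_scale _ _ _ _) _.
rewrite Rabs_pos_eq; nra.
Qed.

Lemma radial_trunc_lipschitz x y :
  N (sub (radial_trunc x) (radial_trunc y)) <= 4 * L * vnorm (vsub x y).
Proof.
case: (Rle_lt_dec (vnorm x) (vnorm y)) => [le_xy | /Rlt_le le_yx].
  exact: radial_trunc_lipschitz_ordered.
by rewrite N_subC vnorm_subC; apply: radial_trunc_lipschitz_ordered.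
Qed.

End RadialTruncation.

Theorem lemma2p2 (d m : nat) (f : Vec d -> Vec d) (g : Vec d -> Mat d m)
    (L : R -> R) (Dstar : R) (h : R -> R)
    (HL : local_lipschitz f g L) (Hh : cond_h L Dstar h)
    (Delta : R) (HD : 0 < Delta <= Dstar)
    (Hf0 : vnorm (f (vzero d)) <= h Delta)
    (Hg0 : mnorm (g (vzero d)) <= h Delta)
    (HL1 : 1 <= L (h Delta)) :
  forall x xb : Vec d,
    Rmax (vnorm (vsub (f_trunc h Delta f x) (f_trunc h Delta f xb)))
         (mnorm (msub (g_trunc h Delta g x) (g_trunc h Delta g xb)))
      <= 4 * L (h Delta) * vnorm (vsub x xb).
Proof.
case: HL => [_ [lip_ball _]]; case: Hh => [_ [h_pos _]].
have H_gt0 : 0 < h Delta by apply: h_pos.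
have f_lip x y : vnorm x <= h Delta -> vnorm y <= h Delta ->
    vnorm (vsub (f x) (f y)) <= L (h Delta) * vnorm (vsub x y).
  by move=> hx hy; apply: Rle_trans (lip_ball _ _ _ H_gt0 hx hy); apply: Rmax_l.
have g_lip x y : vnorm x <= h Delta -> vnorm y <= h Delta ->
    mnorm (msub (g x) (g y)) <= L (h Delta) * vnorm (vsub x y).
  by move=> hx hy; apply: Rle_trans (lip_ball _ _ _ H_gt0 hx hy); apply: Rmax_r.
move=> x xb; apply: Rmax_lub.
- exact: (radial_trunc_lipschitz vnorm_subC vnorm_le_sub vnorm_sub_scale vscale1
            _ _ _ _ H_gt0 HL1 f_lip Hf0).
- exact: (radial_trunc_lipschitz mnorm_subC mnorm_le_sub mnorm_sub_scale mscale1
            _ _ _ _ H_gt0 HL1 g_lip Hg0).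
Qed.
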